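(* Let $D$ be a database, $\mathcal{A}$ an automaton, and $w$ a walk of $D$ belonging to the walk semantics $\llbracket \mathcal{A}\rrbracket_W(D)$ (i.e. $w=\pi_D(r)$ for some run $r$ of $D\times\mathcal{A}$). Then there exist $n\ge 1$ and walks $u_1,v_1,u_2,\dots,v_n,u_{n+1}$ of $D$ such that $w=u_1v_1u_2\cdots v_nu_{n+1}$ (concatenation), every $u_i$ satisfies $\mathrm{src}(u_i)=\mathrm{tgt}(u_i)$, and the walk $v_1v_2\cdots v_n$ belongs to the simple-run semantics $\llbracket \mathcal{A}\rrbracket_{SR}(D)$.
   Context: A database is $D=(\Sigma,V,E,\mathrm{src},\mathrm{tgt},\mathrm{lbl})$ with $\Sigma$ a finite alphabet, $V$ a finite set of vertices, $E$ a finite set of edges, $\mathrm{src},\mathrm{tgt}:E\to V$ and $\mathrm{lbl}:E\to 2^\Sigma$. A walk is a sequence $(n_0,e_0,n_1,\dots,e_{k-1},n_k)$, $k\ge0$, of vertices and edges with $\mathrm{src}(e_i)=n_i$, $\mathrm{tgt}(e_i)=n_{i+1}$; its length is $k$, $\mathrm{src}(w)=n_0$, $\mathrm{tgt}(w)=n_k$, and $\mathrm{lbl}(w)=\{u_0\cdots u_{k-1}: u_i\in\mathrm{lbl}(e_i)\}$. Walks $w,w'$ with $\mathrm{tgt}(w)=\mathrm{src}(w')$ concatenate into $ww'$. A walk is simple if it repeats no vertex. An automaton is $\mathcal{A}=(\Sigma,Q,\Delta,I,F)$ with $\Delta\subseteq Q\times\Sigma\times Q$, initial states $I$ and final states $F$.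 The run database $D\times\mathcal{A}$ is the database with vertex set $V\times Q$, edge set $\{(e,(q,a,q'))\in E\times\Delta : a\in\mathrm{lbl}(e)\}$, where the edge $(e,(q,a,q'))$ has source $(\mathrm{src}(e),q)$, target $(\mathrm{tgt}(e),q')$ and label $\{a\}$. A run is a walk of $D\times\mathcal{A}$ starting in $V\times I$ and ending in $V\times F$. $\pi_D$ maps $(n,q)\mapsto n$, $(e,t)\mapsto e$, and walks componentwise. The walk semantics $\llbracket\mathcal{A}\rrbracket_W(D)$ is the bag $\{\pi_D(r): r \text{ run of } D\times\mathcal{A}\}$, and the simple-run semantics $\llbracket\mathcal{A}\rrbracket_{SR}(D)$ is the bag $\{\pi_D(r): r\text{ simple run of }D\times\mathcal{A}\}$ (a walk's multiplicity is the number of such runs projecting to it). *)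

From mathcomp Require Import all_boot.
Set Implicit Arguments. Unset Strict Implicit. Unset Printing Implicit Defensive.

(* A walk (n0, [e0; ...; e_{k-1}]) : its start vertex and its edge list.
   Validity (src e0 = n0, src e_{i+1} = tgt e_i) is the predicate is_walk. *)
Definition walk (V E : Type) := (V * seq E)%type.

Section Walks.
Variables (V E : eqType) (src tgt : E -> V).

Fixpoint is_walk_from (n : V) (es : seq E) : bool :=
  match es with
  | [::] => true
  | e :: es' => (src e == n) && is_walk_from (tgt e) es'
  end.

Definition is_walk (w : walk V E) : bool := is_walk_from w.1 w.2.
Definition wsrc (w : walk V E) : V := w.1.
Definition wtgt (w : walk V E) : V := last w.1 (map tgt w.2).
Definition wverts (w : walk V E) : seq V := w.1 :: map tgt w.2.
Definition is_simple (w : walk V E) : bool := uniq (wverts w).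

(* concatenation ww' (meaningful when wtgt w = wsrc w') *)
Definition wcat (w w' : walk V E) : walk V E := (w.1, w.2 ++ w'.2).
Definition wconcat (w : walk V E) (ws : seq (walk V E)) : walk V E :=
  foldl wcat w ws.
Definition composable (w : walk V E) (ws : seq (walk V E)) : bool :=
  path (fun a b => wtgt a == wsrc b) w ws.
End Walks.

Section RunDB.
Variables (Sig V E Q : finType) (src tgt : E -> V) (lbl : E -> {set Sig})
          (Delta : {set Q * Sig * Q}) (I F : {set Q}).

(* edges of D x A are pairs (e, (q,a,q')) with (q,a,q') in Delta and a in lbl e *)
Definition rEdge := (E * (Q * Sig * Q))%type.
Definition is_rEdge (x : rEdge) : bool := (x.2 \in Delta) && (x.2.1.2 \in lbl x.1).
Definition rsrc (x : rEdge) : V * Q := (src x.1, x.2.1.1).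
Definition rtgt (x : rEdge) : V * Q := (tgt x.1, x.2.2).

Definition is_run (r : walk (V * Q) rEdge) : bool :=
  [&& is_walk rsrc rtgt r, all is_rEdge r.2, (wsrc r).2 \in I
    & (wtgt rtgt r).2 \in F].

Definition projD (r : walk (V * Q) rEdge) : walk V E := (r.1.1, map fst r.2).

Definition in_walk_sem (w : walk V E) : Prop :=
  exists r, is_run r /\ projD r = w.
Definition in_sr_sem (w : walk V E) : Prop :=
  exists r, [/\ is_run r, is_simple rtgt r & projD r = w].
End RunDB.

(* Erase loops from a run r of D x A: r splits as u1 v1 u2 ... vn u(n+1) with
   closed walks u_i, and v1 ... vn is a simple walk with the same end points as r
   that uses only edges of r, hence again a run.  Projecting to D is a graph
   morphism, so it maps this decomposition of r to one of w = pi_D(r), and maps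
   v1 ... vn to the projection of a simple run. *)
From mathcomp Require Import all_boot zify.
Set Implicit Arguments. Unset Strict Implicit. Unset Printing Implicit Defensive.

Section Walks.
Variables (V E : eqType) (src tgt : E -> V).
Implicit Types (x : V) (es : seq E) (w u v : walk V E) (ws : seq (walk V E)).

Lemma wconcatE w ws : wconcat w ws = (w.1, w.2 ++ flatten (map snd ws)).
Proof.
elim: ws w => [|v ws IHws] [x es] /=; first by rewrite cats0.
by rewrite IHws catA.
Qed.

Lemma is_walk_from_cat x es1 es2 :
  is_walk_from src tgt x (es1 ++ es2) =
  is_walk_from src tgt x es1 && is_walk_from src tgt (last x (map tgt es1)) es2.
Proof. by elim: es1 x => [|e es1 IHes1] x //=; rewrite IHes1 andbA. Qed.

Lemma is_walk_wcat u v : wtgt tgt u = wsrc v ->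
  is_walk src tgt (wcat u v) = is_walk src tgt u && is_walk src tgt v.
Proof. by move=> uv; rewrite /is_walk /= is_walk_from_cat -/(wtgt tgt u) uv. Qed.

Lemma wtgt_wcat u v : wtgt tgt u = wsrc v -> wtgt tgt (wcat u v) = wtgt tgt v.
Proof. by rewrite /wtgt /= map_cat last_cat => ->. Qed.

Lemma split_closed_prefix x es : x \in map tgt es ->
  exists es1 es2, [/\ es = es1 ++ es2, 0 < size es1 & last x (map tgt es1) = x].
Proof.
case/mapP=> e /splitPr [es1 es2] ->.
exists (rcons es1 e), es2.
by rewrite cat_rcons size_rcons map_rcons last_rcons.
Qed.

Lemma composable_wtgt u u' ws : wtgt tgt u = wtgt tgt u' ->
  composable tgt u ws = composable tgt u' ws.
Proof. by case: ws => //= v ws ->. Qed.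

Lemma wverts_subset c w : wsrc c = wsrc w -> {subset c.2 <= w.2} ->
  {subset wverts tgt c <= wverts tgt w}.
Proof.
case: c w => [x es] [y fs] /= -> es_fs z; rewrite !inE.
by case/orP=> [-> // | /mapP [e /es_fs e_fs ->]]; rewrite map_f ?orbT.
Qed.

Lemma is_simple_cons x e c : wsrc c = tgt e -> x \notin wverts tgt c ->
  is_simple tgt c -> is_simple tgt (x, e :: c.2).
Proof. by case: c => y es /= ->; rewrite /is_simple /= => ->. Qed.

Definition loop_decomposition w u1 (ps : seq (walk V E * walk V E)) : Prop :=
  let ws := flatten [seq [:: p.1; p.2] | p <- ps] in
  [/\ all (is_walk src tgt) (u1 :: ws) && composable tgt u1 ws,
      w = wconcat u1 ws
    & all (fun u => wsrc u == wtgt tgt u) (u1 :: map snd ps)].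

Lemma wsrc_loop_decomposition w u1 ps :
  loop_decomposition w u1 ps -> wsrc u1 = wsrc w.
Proof. by case=> _ ->; rewrite wconcatE. Qed.

Lemma loop_decomposition_loop u w u1 ps :
  is_walk src tgt u -> wsrc u = wtgt tgt u -> wtgt tgt u = wsrc w ->
  loop_decomposition w u1 ps -> loop_decomposition (wcat u w) (wcat u u1) ps.
Proof.
move=> u_walk u_closed u_w dec; have u1_src := wsrc_loop_decomposition dec.
have u_u1 : wtgt tgt u = wsrc u1 by rewrite u1_src.
case: dec => /andP [walks comp] w_eq closed; split.
- rewrite (composable_wtgt _ (wtgt_wcat u_u1)) comp andbT.
  by move: walks => /= /andP [walk_u1 ->]; rewrite is_walk_wcat // u_walk walk_u1.
- by rewrite w_eq !wconcatE /wcat /= catA.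
- move: closed => /= /andP [/eqP u1_closed ->].
  by rewrite (wtgt_wcat u_u1) -u1_closed -u_u1 -u_closed eqxx.
Qed.

Lemma loop_decomposition_edge e w u1 ps : wsrc w = tgt e ->
  loop_decomposition w u1 ps ->
  loop_decomposition (src e, e :: w.2) (src e, [::]) (((src e, [:: e]), u1) :: ps).
Proof.
move=> w_src dec; have u1_src := wsrc_loop_decomposition dec.
case: dec => /andP [walks comp] w_eq closed; split.
- move: walks comp => /= walks comp.
  by rewrite walks comp u1_src w_src /is_walk /wtgt /= !eqxx.
- by rewrite w_eq !wconcatE.
- by rewrite /= eqxx.
Qed.

(* Induction on the length: if the start vertex is visited again, the walk up to
   such a return is absorbed into the first loop [u1]; otherwise the first edge
   becomes a one-edge [v1] in front of the erasure of the rest. *)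
Lemma loop_erasure w : is_walk src tgt w ->
  exists u1 p ps, let c := wconcat p.1 (map fst ps) in
  [/\ loop_decomposition w u1 (p :: ps), is_walk src tgt c, is_simple tgt c,
      wsrc c = wsrc w /\ wtgt tgt c = wtgt tgt w
    & {subset c.2 <= w.2}].
Proof.
case: w => x es.
have [n] := ubnP (size es); elim: n => // n IHn in x es *; rewrite ltnS => es_le walk_es.
case: (boolP (x \in map tgt es)) => [x_ret | x_new].
  have [es1 [es2 [es_eq es1_gt0 es1_closed]]] := split_closed_prefix x_ret.
  rewrite {}es_eq in es_le walk_es *.
  have es2_lt : size es2 < n by move: es_le; rewrite size_cat; lia.
  move: walk_es; rewrite /is_walk /= is_walk_from_cat es1_closed => /andP [walk1 walk2].
  have [u1 [p [ps [dec c_walk c_simple [c_src c_tgt] c_sub]]]] := IHn x es2 es2_lt walk2.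
  exists (wcat (x, es1) u1), p, ps; split => //.
  - exact: (@loop_decomposition_loop (x, es1) (x, es2)).
  - by rewrite c_src; split=> //; rewrite c_tgt (@wtgt_wcat (x, es1) (x, es2)).
  - by move=> f /c_sub f_es2; rewrite mem_cat f_es2 orbT.
case: es es_le walk_es x_new => [|e es] es_le walk_es x_new.
  by exists (x, [::]), ((x, [::]), (x, [::])), [::]; rewrite /loop_decomposition /wtgt /= eqxx.
rewrite /is_walk /= in walk_es; case/andP: walk_es x_new => /eqP <- walk_es x_new.
have [u1 [p [ps [dec c_walk c_simple [c_src c_tgt] c_sub]]]] := IHn (tgt e) es es_le walk_es.
set c := wconcat p.1 (map fst ps) in dec c_walk c_simple c_src c_tgt c_sub *.
have c'_def : wconcat ((src e, [:: e]), u1).1 (map fst (p :: ps)) = wcat (src e, [:: e]) c.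
  by rewrite /c !wconcatE.
exists (src e, [::]), ((src e, [:: e]), u1), (p :: ps); rewrite c'_def; split.
- exact: (@loop_decomposition_edge e (tgt e, es)).
- by rewrite is_walk_wcat ?c_src // c_walk /is_walk /= eqxx.
- by apply: is_simple_cons => //; apply: contra x_new => /(wverts_subset c_src c_sub).
- by rewrite (@wtgt_wcat (src e, [:: e])) ?c_src.
- by move=> f; rewrite !inE => /orP [-> // | /c_sub ->]; rewrite orbT.
Qed.
End Walks.

Section WalkMorphism.
Variables (V E V' E' : eqType) (src tgt : E -> V) (src' tgt' : E' -> V').
Variables (f : V -> V') (g : E -> E').
Hypotheses (src_g : forall e, src' (g e) = f (src e))
           (tgt_g : forall e, tgt' (g e) = f (tgt e)).

Definition map_walk (w : walk V E) : walk V' E' := (f w.1, map g w.2).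

Definition map_walk_pair (p : walk V E * walk V E) := (map_walk p.1, map_walk p.2).

Lemma is_walk_map w : is_walk src tgt w -> is_walk src' tgt' (map_walk w).
Proof.
case: w => x es; rewrite /is_walk /=.
by elim: es x => [|e es IHes] x //= /andP [/eqP <- /IHes]; rewrite src_g tgt_g eqxx.
Qed.

Lemma wtgt_map w : wtgt tgt' (map_walk w) = f (wtgt tgt w).
Proof. by case: w => x es; rewrite /wtgt /=; elim: es x => //= e es IHes x; rewrite tgt_g IHes. Qed.

Lemma wconcat_map w ws : map_walk (wconcat w ws) = wconcat (map_walk w) (map map_walk ws).
Proof. by rewrite !wconcatE /map_walk /= map_cat map_flatten -!map_comp. Qed.

Lemma composable_map w ws :
  composable tgt w ws -> composable tgt' (map_walk w) (map map_walk ws).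
Proof. by rewrite /composable path_map; apply: sub_path => u v /eqP uv; rewrite /= wtgt_map uv. Qed.

Lemma loop_decomposition_map w u1 ps :
  loop_decomposition src tgt w u1 ps ->
  loop_decomposition src' tgt' (map_walk w) (map_walk u1) (map map_walk_pair ps).
Proof.
have ws_map : flatten [seq [:: p.1; p.2] | p <- map map_walk_pair ps] =
              map map_walk (flatten [seq [:: p.1; p.2] | p <- ps]).
  by rewrite map_flatten -!map_comp.
case=> /andP [walks comp] -> closed; split.
- rewrite ws_map -map_cons all_map composable_map // andbT.
  by apply: sub_all walks => u; exact: is_walk_map.
- by rewrite ws_map wconcat_map.
- have -> : map snd (map map_walk_pair ps) = map map_walk (map snd ps).
    by rewrite -!map_comp.
  rewrite -map_cons all_map.
  by apply: sub_all closed => u /eqP u_closed; rewrite /= wtgt_map -u_closed.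
Qed.
End WalkMorphism.

Lemma is_run_subwalk (Sig V E Q : finType) (src tgt : E -> V) (lbl : E -> {set Sig})
    (Delta : {set Q * Sig * Q}) (I F : {set Q}) (r r' : walk (V * Q) (rEdge Sig E Q)) :
  is_run src tgt lbl Delta I F r -> is_walk (rsrc src) (rtgt tgt) r' ->
  wsrc r' = wsrc r -> wtgt (rtgt tgt) r' = wtgt (rtgt tgt) r -> {subset r'.2 <= r.2} ->
  is_run src tgt lbl Delta I F r'.
Proof.
case/and4P=> _ /allP r_edges r_I r_F r'_walk r'_src r'_tgt r'_sub.
rewrite /is_run r'_walk r'_src r'_tgt r_I r_F !andbT.
by apply/allP => x /r'_sub; exact: r_edges.
Qed.

Theorem lemma13 (Sig V E Q : finType) (src tgt : E -> V) (lbl : E -> {set Sig})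
    (Delta : {set Q * Sig * Q}) (I F : {set Q}) (w : walk V E) :
  in_walk_sem src tgt lbl Delta I F w ->
  exists (u1 : walk V E) (ps : seq (walk V E * walk V E)),
    let ws := flatten [seq [:: p.1; p.2] | p <- ps] in
    let us := u1 :: map snd ps in
    let vs := map fst ps in
    [/\ 1 <= size ps,
        all (is_walk src tgt) (u1 :: ws) && composable tgt u1 ws,
        w = wconcat u1 ws,
        all (fun u => wsrc u == wtgt tgt u) us
      & in_sr_sem src tgt lbl Delta I F (wconcat (head u1 vs) (behead vs))].
Proof.
case=> r [r_run <-]; have /and4P [r_walk _ _ _] := r_run.
have [u1 [p [ps [r_dec c_walk c_simple [c_src c_tgt] c_sub]]]] := loop_erasure r_walk.
have proj_rsrc (x : rEdge Sig E Q) : src x.1 = (rsrc src x).1 by [].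
have proj_rtgt (x : rEdge Sig E Q) : tgt x.1 = (rtgt tgt x).1 by [].
have [walks w_eq closed] := loop_decomposition_map proj_rsrc proj_rtgt r_dec.
exists (map_walk fst fst u1), (map (map_walk_pair fst fst) (p :: ps)); split=> //.
exists (wconcat p.1 (map fst ps)); split=> //.
  exact: (is_run_subwalk r_run).
by rewrite -[projD _]/(map_walk fst fst _) wconcat_map /= -!map_comp.
Qed.
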